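(* Let $p$ be a prime and $G$ a cyclic $p$-group. Then $K(G,C_p)=0$.
   Context: For $K\le G$ and a homomorphism $\rho:K\to C_p$, $K\times\rho=\{(k,\rho(k))\}$ is its graph; $B(G,C_p)$ is the subgroup of the Burnside ring $B(G\times C_p)$ (free on subgroups of $G\times C_p$) spanned by the graphs. $K(G\times C_p)$ is the kernel of $B(G\times C_p)\to R_{\mathbb Q}(G\times C_p)$, $S\mapsto[\mathbb Q[(G\times C_p)/S]]$, and $K(G,C_p)=K(G\times C_p)\cap B(G,C_p)$. *)

From HB Require Import structures.
From mathcomp Require Import all_boot all_order all_algebra all_fingroup all_solvable.
Set Implicit Arguments. Unset Strict Implicit. Unset Printing Implicit Defensive.

(* Convention: C_p is represented by an arbitrary group C of order p (in some
   finGroupType cT); G x C_p is the subgroup setX G C of the external direct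
   product group (gT * cT)%type (gproduct.v). *)

Definition graph_of (gT cT : finGroupType) (K : {set gT}) (rho : gT -> cT)
  : {set (gT * cT)} := [set (k, rho k) | k in K].

Definition is_graph (gT cT : finGroupType) (G : {group gT}) (C : {group cT})
    (S : {set (gT * cT)}) : Prop :=
  exists K : {group gT}, K \subset G /\
    exists rho : {morphism K >-> cT}, (rho @* K)%g \subset C /\ S = graph_of K rho.

(* An element of the Burnside ring B(H): a finitely supported Z-combination
   sum_S a(S) [H/S] of subgroups S of H, encoded by its coefficient function. *)
Definition in_burnside (T : finGroupType) (H : {group T})
    (a : {ffun {set T} -> int}) : Prop :=
  forall S : {set T}, a S != 0 -> group_set S /\ S \subset H.

Definition in_burnside_graph (gT cT : finGroupType) (G : {group gT})
    (C : {group cT}) (a : {ffun {set (gT * cT)} -> int}) : Prop :=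
  forall S, a S != 0 -> is_graph G C S.

(* Character of the permutation representation Q[H/S], evaluated at h:
   the number of left cosets xS (x in H) fixed by h. *)
Definition perm_char (T : finGroupType) (H S : {set T}) (h : T) : nat :=
  #|[set X in lcosets S H | (h *: X)%g == X]|.

(* a lies in the kernel of B(H) -> R_Q(H), S |-> [Q[H/S]]: the virtual
   Q-representation sum_S a(S) Q[H/S] is zero, i.e. (characteristic 0, so
   representations are determined by their characters) its character vanishes. *)
Definition in_burnside_kernel (T : finGroupType) (H : {group T})
    (a : {ffun {set T} -> int}) : Prop :=
  in_burnside H a /\
  forall h, h \in H -> (\sum_(S : {set T}) a S * (perm_char H S h)%:Z = 0)%R.

From mathcomp Require Import all_boot all_order all_algebra all_fingroup all_solvable.
Set Implicit Arguments. Unset Strict Implicit. Unset Printing Implicit Defensive.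
Import GRing.Theory.

(* At a central element h, the permutation character of H/S is [H:S]
   when h lies in S and 0 otherwise.  Choose S0 of maximal order in the
   support of a.  It is the graph of a homomorphism on a cyclic group <[k]>,
   hence generated by h = (k, rho k), so every support subgroup containing h
   contains S0 and therefore equals it.  Evaluating the character of a at h
   leaves the single term a(S0) [H:S0], which must vanish. *)

Lemma perm_char_eq0 (T : finGroupType) (H S : {group T}) h :
  h \in ('C(H))%g -> h \notin S -> perm_char H S h = 0%N.
Proof.
move=> cHh hS; apply/eqP; rewrite cards_eq0; apply/eqP/setP => X.
rewrite !inE; apply/negbTE/andP => -[/lcosetsP [x xH ->] /eqP fixX].
have hxS : (h * x \in x *: S)%g by rewrite -fixX -lcosetM lcoset_refl.
by move: hxS; rewrite (centP cHh x xH) mem_lcoset mulKg (negbTE hS).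
Qed.

Lemma perm_char_gt0 (T : finGroupType) (H S : {group T}) h :
  h \in S -> (0 < perm_char H S h)%N.
Proof.
move=> hS; apply/card_gt0P; exists (S : {set T}); rewrite !inE lcoset_id //.
by rewrite eqxx andbT; apply/lcosetsP; exists 1%g; rewrite ?group1 ?lcoset1.
Qed.

Lemma burnside_kernel_coef_eq0 (T : finGroupType) (H : {group T}) a h
    (S0 : {set T}) :
  in_burnside_kernel H a -> h \in H -> h \in ('C(H))%g -> h \in S0 ->
  (forall S, a S != 0%R -> h \in S -> S = S0) -> a S0 = 0%R.
Proof.
move=> [inB charH0] hH cHh hS0 uniqS0; apply/eqP/negP => /negP aS0.
have [gS0 _] := inB S0 aS0.
have charS0 : (a S0 * (perm_char H S0 h)%:Z = 0)%R.
  rewrite -(charH0 h hH) (bigD1 S0) //= big1 ?addr0 // => S neS.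
  have [-> | aS] := eqVneq (a S) 0%R; first by rewrite mul0r.
  have [gS _] := inB S aS.
  have hS : h \notin S by apply: contra neS => hS; rewrite (uniqS0 S aS hS).
  by rewrite (perm_char_eq0 (S := Group gS)) ?mulr0.
move/eqP: charS0; rewrite mulf_eq0 (negbTE aS0) /= eqz_nat.
by apply/negP; rewrite -lt0n (@perm_char_gt0 _ H (Group gS0)).
Qed.

Lemma expg_pair (gT cT : finGroupType) (x : gT) (y : cT) n :
  (((x, y) : gT * cT) ^+ n)%g = (x ^+ n, y ^+ n)%g.
Proof. by elim: n => // n IHn; rewrite !expgS IHn. Qed.

Lemma graph_of_cycle_sub (gT cT : finGroupType) (K : {group gT}) k
    (rho : {morphism K >-> cT}) (S : {group (gT * cT)}) :
  generator K k -> (k, rho k) \in S -> graph_of K rho \subset S.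
Proof.
move=> /eqP defK hS; have kK : k \in K by rewrite defK cycle_id.
apply/subsetP => _ /imsetP [x xK ->].
have /cycleP [i ->] : x \in <[k]>%g by rewrite -defK.
by rewrite morphX // -expg_pair groupX.
Qed.

Lemma abelian_setX (gT cT : finGroupType) (G : {group gT}) (C : {group cT}) :
  abelian G -> abelian C -> abelian (setX G C).
Proof.
move=> /centsP cGG /centsP cCC; apply/centsP.
move=> [x1 y1] /[!in_setX] /andP [x1G y1C] [x2 y2] /[!in_setX] /andP [x2G y2C].
by apply/eqP; rewrite xpair_eqE (cGG _ x1G _ x2G) (cCC _ y1C _ y2C) !eqxx.
Qed.

Theorem corollary5p6 (p : nat) (gT cT : finGroupType)
    (G : {group gT}) (C : {group cT}) :
  prime p -> (cyclic G)%g -> (p.-group G)%g -> #|C| = p ->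
  forall a : {ffun {set (gT * cT)} -> int},
    in_burnside_kernel (setX_group G C) a -> in_burnside_graph G C a ->
    a = 0%R.
Proof.
move=> p_pr cycG _ oC a kerA graphA; have [inB _] := kerA.
have cHH : abelian (setX G C).
  apply: abelian_setX; first exact: cyclic_abelian.
  by apply/cyclic_abelian/prime_cyclic; rewrite oC.
apply/ffunP => S1; rewrite ffunE; apply/eqP/contraT => aS1.
have [S0 aS0 maxS0] :=
  @arg_maxnP _ S1 (fun S => a S != 0%R) (fun S => #|S|) aS1.
have [K [sKG [rho [sRC defS0]]]] := graphA S0 aS0.
have /cyclicP [k /eqP genK] := cyclicS sKG cycG.
have kK : k \in K by rewrite (eqP genK) cycle_id.
have hS0 : (k, rho k) \in S0 by rewrite defS0 imset_f.
have hH : (k, rho k) \in setX G C.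
  by rewrite in_setX (subsetP sKG) ?(subsetP sRC) ?mem_morphim.
have uniqS0 S : a S != 0%R -> (k, rho k) \in S -> S = S0.
  move=> aS hS; have [gS _] := inB S aS.
  have sS0S : S0 \subset S.
    by rewrite defS0 (graph_of_cycle_sub (S := Group gS) genK).
  by apply/eqP; rewrite eq_sym eqEcard sS0S; apply: maxS0.
have cHh := subsetP cHH _ hH.
by move: aS0; rewrite (burnside_kernel_coef_eq0 kerA hH cHh hS0 uniqS0) eqxx.
Qed.
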